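(* Let $\mathrm{k}$ be an infinite field. For $n,m\in\{2,3\}$, the $\mathrm{k}$-algebra $\mathrm{k}[T]/(T^n)\times\mathrm{k}[T]/(T^m)$ has infinitely many subalgebras.
   Context: Subalgebras are unital (contain $1$). *)

From HB Require Import structures.
From mathcomp Require Import all_boot all_order all_algebra.
Set Implicit Arguments. Unset Strict Implicit. Unset Printing Implicit Defensive.
Import GRing.Theory.
Local Open Scope ring_scope.

(* Concrete model of the k-algebra  A = k[T]/(T^n) x k[T]/(T^m):
   elements are pairs (p, q) of polynomials in normal form
   (p = p %% 'X^n, q = q %% 'X^m); operations are the componentwise
   polynomial operations followed by reduction to normal form. *)
Section TruncProd.
Variables (K : fieldType) (n m : nat).
Definition pairT := ({poly K} * {poly K})%type.

Definition redA (x : pairT) : pairT := (x.1 %% 'X^n, x.2 %% 'X^m).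
Definition inA (x : pairT) : bool := redA x == x.
Definition oneA : pairT := redA (1, 1).
Definition addA (x y : pairT) : pairT := (x.1 + y.1, x.2 + y.2).
Definition scaleA (c : K) (x : pairT) : pairT := (c *: x.1, c *: x.2).
Definition mulA (x y : pairT) : pairT := redA (x.1 * y.1, x.2 * y.2).

Definition is_subalgA (S : pred pairT) : Prop :=
  [/\ forall x, S x -> inA x,
      S oneA,
      forall x y, S x -> S y -> S (addA x y),
      forall c x, S x -> S (scaleA c x)
    & forall x y, S x -> S y -> S (mulA x y)].
End TruncProd.

From mathcomp Require Import all_boot all_order all_algebra.
From Stdlib Require Import Classical.
Set Implicit Arguments. Unset Strict Implicit. Unset Printing Implicit Defensive.
Local Open Scope ring_scope.
Import GRing.Theory.

(* For a in k, the pairs (p, q) with p(0) = q(0) and p'(0) = a q'(0) form a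
   subalgebra S_a: both conditions only involve the degree <= 1 truncations,
   which multiply as dual numbers.  The witness (aT, T) lies in S_a and in no
   other S_b, so the S_a are pairwise distinct; an infinite family of pairwise
   distinct subalgebras cannot be exhausted by finitely many. *)

Section AvoidFinitelyMany.

Variables (I : eqType) (T : Type) (F : I -> pred T).
Hypothesis I_infinite : forall s : seq I, exists a, a \notin s.
Hypothesis F_separating : forall a b, a != b -> exists x, F a x != F b x.

Lemma separating_family_avoids_seq (N : nat) (Ss : nat -> pred T) :
  exists s : seq I, forall a, a \notin s ->
    forall i, (i < N)%N -> exists x, F a x != Ss i x.
Proof.
elim: N => [|N [s IHs]]; first by exists [::].
have [[b Fb_eq]|no_match] := classic (exists b, forall x, F b x = Ss N x).
- exists (b :: s) => a; rewrite inE negb_or => /andP[a_neq_b a_notin_s] i.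
  rewrite ltnS leq_eqVlt => /orP[/eqP-> | ltiN]; last exact: IHs.
  have [x Fab] := F_separating a_neq_b.
  by exists x; rewrite -Fb_eq.
- exists s => a a_notin_s i.
  rewrite ltnS leq_eqVlt => /orP[/eqP-> | ltiN]; last exact: IHs.
  have [x /eqP Fa_neq] : exists x, ~ F a x = Ss N x.
    by apply: not_all_ex_not => Fa_eq; apply: no_match; exists a.
  by exists x.
Qed.

Lemma separating_family_avoids (N : nat) (Ss : nat -> pred T) :
  exists a, forall i, (i < N)%N -> exists x, F a x != Ss i x.
Proof.
have [s avoids] := separating_family_avoids_seq N Ss.
by have [a a_notin_s] := I_infinite s; exists a; apply: avoids.
Qed.

End AvoidFinitelyMany.

Lemma coef_modXn (K : fieldType) (n i : nat) (p : {poly K}) :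
  (i < n)%N -> (p %% 'X^n)`_i = p`_i.
Proof. by move=> ltin; rewrite -Pdiv.IdomainMonic.take_poly_modp coef_take_poly ltin. Qed.

Lemma coefM1 (R : nzRingType) (p q : {poly R}) :
  (p * q)`_1 = p`_0 * q`_1 + p`_1 * q`_0.
Proof. by rewrite coefM !big_ord_recr big_ord0 /= add0r. Qed.

Section RatioSubalgebras.

Variables (K : fieldType) (n m : nat).
Hypotheses (n_gt1 : (1 < n)%N) (m_gt1 : (1 < m)%N).

Definition ratio_subalg (a : K) : pred (pairT K) :=
  fun x => [&& inA n m x, x.1`_0 == x.2`_0 & x.1`_1 == a * x.2`_1].

Lemma ratio_subalg_is_subalg (a : K) : is_subalgA n m (ratio_subalg a).
Proof.
have [n_gt0 m_gt0] : (0 < n)%N /\ (0 < m)%N by split; apply: ltnW.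
split.
- by move=> x /and3P[].
- rewrite /ratio_subalg /oneA /inA /redA /= !coef_modXn // !modp_id eqxx.
  by rewrite !eqxx coef1 /= mulr0 eqxx.
- move=> [p q] [p' q'] /and3P[/eqP[/= modp modq] /eqP e0 /eqP e1].
  move=> /and3P[/eqP[/= modp' modq'] /eqP e0' /eqP e1'].
  rewrite /ratio_subalg /inA /redA /addA /= !modpD modp modq modp' modq' eqxx.
  by rewrite !coefD e0 e0' e1 e1' mulrDr !eqxx.
- move=> c [p q] /and3P[/eqP[/= modp modq] /eqP e0 /eqP e1].
  rewrite /ratio_subalg /inA /redA /scaleA /= !modpZl modp modq eqxx.
  by rewrite !coefZ e0 e1 mulrCA !eqxx.
- move=> [p q] [p' q'] /and3P[_ /eqP e0 /eqP e1] /and3P[_ /eqP e0' /eqP e1'].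
  rewrite /ratio_subalg /inA /redA /mulA /= !modp_id eqxx /=.
  rewrite !coef_modXn // !coef0M !coefM1 e0 e0' e1 e1' eqxx /=.
  by rewrite mulrDr mulrCA -mulrA.
Qed.

Lemma ratio_subalg_scaleX (a b : K) : ratio_subalg b (a *: 'X, 'X) = (a == b).
Proof.
have modXk k : (1 < k)%N -> forall c : K, (c *: 'X) %% 'X^k = c *: 'X.
  move=> k_gt1 c; rewrite modp_small // size_polyXn ltnS.
  by rewrite (leq_trans (size_scale_leq _ _)) // size_polyX.
rewrite /ratio_subalg /inA /redA /= modXk // -[X in X %% _]scale1r modXk //.
by rewrite scale1r eqxx !coefZ !coefX !mulr0 !mulr1 !eqxx.
Qed.

Lemma ratio_subalg_separating (a b : K) :
  a != b -> exists x, ratio_subalg a x != ratio_subalg b x.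
Proof.
move=> neq_ab; exists (pair (a *: 'X) 'X).
by rewrite !ratio_subalg_scaleX eqxx (negbTE neq_ab).
Qed.

End RatioSubalgebras.

Theorem lemma3p7 (K : fieldType)
  (Kinf : forall s : seq K, exists x : K, x \notin s)
  (n m : nat) (hn : n \in [:: 2%N; 3%N]) (hm : m \in [:: 2%N; 3%N]) :
  forall (N : nat) (Ss : nat -> pred (pairT K)),
    exists S : pred (pairT K),
      is_subalgA n m S /\
      (forall i, (i < N)%N -> exists x, S x != Ss i x).
Proof.
have n_gt1 : (1 < n)%N by move: hn; rewrite !inE => /orP[]/eqP->.
have m_gt1 : (1 < m)%N by move: hm; rewrite !inE => /orP[]/eqP->.
move=> N Ss.
have [a avoids] := separating_family_avoids Kinf
  (ratio_subalg_separating n_gt1 m_gt1) N Ss.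
by exists (ratio_subalg n m a); split; first exact: ratio_subalg_is_subalg.
Qed.
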